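(* Let $M=M^T\in\mathbb{R}^{3\times3}$ be positive definite, let $m_0$ satisfy $\lambda_{\min}(M)\le m_0\le\lambda_{\max}(M)$, let $\lambda>0$, and let $K_r=K_r^T\in\mathbb{R}^{4\times4}$ be positive definite. For $q=[q_0,\vec q^{\,T}]^T\in\mathcal{S}^3$ and $\dot q\in\mathbb{R}^4$ with $q^T\dot q=0$ set $\omega=2J^T(q)\dot q$, $$D(q)=J(q)MJ^T(q)+m_0qq^T,\qquad C(q,\dot q)=-J(q)(M\omega)^{\wedge}J^T(q)-D(q)Q(\dot q)Q^T(q),$$ and $s(\bar g)=\dot q+\lambda(q_0q-\bar 1)$ for $\bar g=(q,\dot q)$, with $\bar 1=[1,0,0,0]^T$. Consider the Lagrangian system $D(q)\ddot q+C(q,\dot q)\dot q=\bar\tau$ with configuration manifold $\mathcal{S}^3$, in closed loop with $$\bar\tau=-\lambda\Big(D(q)\big(q_0\dot q+\dot q_0q\big)+C(q,\dot q)\big(q_0q-\bar 1\big)\Big)-K_r\,s(\bar g).$$ Then the equilibrium $s(\bar g)=0_{4\times1}$ is globally exponentially stable: there exist constants $k,\gamma>0$ such that every closed-loop solution $q:[t_0,\infty)\to\mathcal{S}^3$ satisfies $\|s(t)\|\le k\,\|s(t_0)\|\,e^{-\gamma(t-t_0)}$ for all $t\ge t_0$.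
   Context: Notation: for $u\in\mathbb{R}^3$, $u^{\wedge}$ is the skew-symmetric matrix with $u^{\wedge}v=u\times v$. For $x=[x_0,\vec x^{\,T}]^T\in\mathbb{R}^4$: $J(x)=\begin{bmatrix}-\vec x^{\,T}\\ x_0I_3+\vec x^{\wedge}\end{bmatrix}\in\mathbb{R}^{4\times3}$ and $Q(x)=\begin{bmatrix}x_0&-\vec x^{\,T}\\ \vec x& x_0I_3+\vec x^{\wedge}\end{bmatrix}$. $\dot q_0$ is the time derivative of the scalar part $q_0$. The Lagrangian system describes rigid-body rotational motion $\dot q=\tfrac12J(q)\omega$, $M\dot\omega=(M\omega)^\wedge\omega+\tau$ with $\bar\tau=\tfrac12J(q)\tau$; $\lambda_{\min}(M),\lambda_{\max}(M)$ are the extreme eigenvalues of $M$. *)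

From HB Require Import structures.
From mathcomp Require Import all_boot all_order all_algebra.
From mathcomp Require Import all_classical all_reals all_analysis.
Set Implicit Arguments. Unset Strict Implicit. Unset Printing Implicit Defensive.
Import Order.TTheory GRing.Theory Num.Theory.
Import numFieldNormedType.Exports.
Local Open Scope ring_scope.
Local Open Scope classical_set_scope.

Section Defs.
Variable R : realType.

Definition q_sc (x : 'cV[R]_4) : R := x ord0 ord0.
Definition q_vecp (x : 'cV[R]_4) : 'cV[R]_3 := \col_(i < 3) x (lift ord0 i) ord0.

(* u^ : skew-symmetric matrix with u^ v = u x v *)
Definition q_hat (u : 'cV[R]_3) : 'M[R]_3 :=
  let c (k : nat) := u (@inord 2 k) ord0 in
  \matrix_(i < 3, j < 3)
    match nat_of_ord i, nat_of_ord j with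
    | 0, 1 => - c 2%N | 0, 2 => c 1%N
    | 1, 0 => c 2%N   | 1, 2 => - c 0%N
    | 2, 0 => - c 1%N | 2, 1 => c 0%N
    | _, _ => 0
    end.

Definition q_Jm (x : 'cV[R]_4) : 'M[R]_(4, 3) :=
  col_mx (- ((q_vecp x)^T)) ((q_sc x)%:M + q_hat (q_vecp x)).

Definition q_Qm (x : 'cV[R]_4) : 'M[R]_4 :=
  block_mx ((q_sc x)%:M : 'M[R]_1) (- ((q_vecp x)^T)) (q_vecp x) ((q_sc x)%:M + q_hat (q_vecp x)).

Definition q_one4 : 'cV[R]_4 := delta_mx ord0 ord0.

Definition q_enorm n (v : 'cV[R]_n) : R := Num.sqrt (\sum_(i < n) v i ord0 ^+ 2).

Definition sym_posdef n (A : 'M[R]_n) : Prop :=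
  A^T = A /\ forall x : 'cV[R]_n, x != 0 -> 0 < (x^T *m A *m x) ord0 ord0.

Definition q_omg (q dq : 'cV[R]_4) : 'cV[R]_3 := 2%:R *: ((q_Jm q)^T *m dq).

Definition q_Dm (M : 'M[R]_3) (m0 : R) (q : 'cV[R]_4) : 'M[R]_4 :=
  q_Jm q *m M *m (q_Jm q)^T + m0 *: (q *m q^T).

Definition q_Cm (M : 'M[R]_3) (m0 : R) (q dq : 'cV[R]_4) : 'M[R]_4 :=
  - (q_Jm q *m q_hat (M *m q_omg q dq) *m (q_Jm q)^T) - q_Dm M m0 q *m q_Qm dq *m (q_Qm q)^T.

Definition s_of (lam : R) (q dq : 'cV[R]_4) : 'cV[R]_4 :=
  dq + lam *: (q_sc q *: q - q_one4).

Definition q_tau_cl (M : 'M[R]_3) (m0 lam : R) (Kr : 'M[R]_4) (q dq : 'cV[R]_4)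
  : 'cV[R]_4 :=
  - (lam *: (q_Dm M m0 q *m (q_sc q *: dq + q_sc dq *: q)
             + q_Cm M m0 q dq *m (q_sc q *: q - q_one4)))
  - Kr *m s_of lam q dq.

Definition closed_loop_solution (M : 'M[R]_3) (m0 lam : R) (Kr : 'M[R]_4)
  (t0 : R) (q dq ddq : R -> 'cV[R]_4) : Prop :=
  [/\ (forall t, t0 < t -> forall i : 'I_4,
          is_derive t 1 (fun u => q u i ord0) (dq t i ord0) /\
          is_derive t 1 (fun u => dq u i ord0) (ddq t i ord0)),
      (forall i : 'I_4,
          {within [set u : R | t0 <= u], continuous (fun u => q u i ord0)} /\
          {within [set u : R | t0 <= u], continuous (fun u => dq u i ord0)}),
      (forall t, t0 <= t -> q_enorm (q t) = 1) &
      (forall t, t0 < t ->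
          q_Dm M m0 (q t) *m ddq t + q_Cm M m0 (q t) (dq t) *m dq t
          = q_tau_cl M m0 lam Kr (q t) (dq t))].

End Defs.

(* Along closed-loop solutions the Lyapunov function V = s^T D(q) s satisfies
   V' = -2 s^T K_r s.  Indeed the control law turns the dynamics into
   D(q) s' = -(C(q, q') + K_r) s, and s^T (D' - 2 C) s = 0: writing
   D(q) = Q(q) diag(m0, M) Q(q)^T with Q(q) orthogonal on S^3, the matrix
   W = Q(q') Q(q)^T is skew-symmetric because q^T q' = 0, D' = W D + (W D)^T
   and C = -J (M w)^ J^T - D W.  Since c1 |s|^2 <= V <= c2 |s|^2 with
   c1 = min(m0, lambda_min M) and c2 = max(m0, lambda_max M), V decays at least
   like exp(-2 (lambda_min K_r / c2) t), which gives the bound on |s| with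
   k = sqrt(c2 / c1). *)

From HB Require Import structures.
From mathcomp Require Import all_boot all_order all_algebra.
From mathcomp Require Import all_classical all_reals all_analysis.
From mathcomp Require Import ring lra.
Import Order.TTheory GRing.Theory Num.Theory.
Import numFieldNormedType.Exports.
Local Open Scope ring_scope.
Local Open Scope classical_set_scope.
Set Implicit Arguments.
Unset Strict Implicit.
Unset Printing Implicit Defensive.

Section ExponentialStability.
Variable R : realType.

Section MatrixCalculus.

Lemma continuous_big_sum (T : topologicalType) n (F : 'I_n -> T -> R) :
  (forall i, continuous (F i)) -> continuous (fun x => \sum_i F i x).
Proof.
elim: n F => [|n IH] F F_cont x.
  under eq_fun do rewrite big_ord0; exact: cst_continuous.
under eq_fun do rewrite big_ord_recr /=.
exact: (continuousD (IH (fun i => F (widen_ord _ i)) (fun i => F_cont _) x) (F_cont _ x)).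
Qed.

Definition mx_continuous {T : topologicalType} {m n} (F : T -> 'M[R]_(m, n)) :=
  forall i j, continuous (fun x => F x i j).

Section Continuity.
Variable T : topologicalType.
Implicit Types f : T -> R.

Lemma mx_continuous_cst m n (A : 'M[R]_(m, n)) : mx_continuous (fun _ : T => A).
Proof. by move=> i j; apply: cst_continuous. Qed.

Lemma mx_continuousD m n (F G : T -> 'M[R]_(m, n)) :
  mx_continuous F -> mx_continuous G -> mx_continuous (fun x => F x + G x).
Proof.
move=> F_cont G_cont i j x; under eq_fun do rewrite mxE.
exact: (continuousD (F_cont i j x) (G_cont i j x)).
Qed.

Lemma mx_continuousZ m n f (F : T -> 'M[R]_(m, n)) :
  continuous f -> mx_continuous F -> mx_continuous (fun x => f x *: F x).
Proof.
move=> f_cont F_cont i j x; under eq_fun do rewrite mxE.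
exact: (continuousM (f_cont x) (F_cont i j x)).
Qed.

Lemma mx_continuous_tr m n (F : T -> 'M[R]_(m, n)) :
  mx_continuous F -> mx_continuous (fun x => (F x)^T).
Proof. by move=> F_cont i j x; under eq_fun do rewrite mxE; apply: F_cont. Qed.

Lemma mx_continuousM m n p (F : T -> 'M[R]_(m, n)) (G : T -> 'M[R]_(n, p)) :
  mx_continuous F -> mx_continuous G -> mx_continuous (fun x => F x *m G x).
Proof.
move=> F_cont G_cont i j x; under eq_fun do rewrite mxE.
by apply: continuous_big_sum => k y; exact: (continuousM (F_cont i k y) (G_cont k j y)).
Qed.

End Continuity.

Definition mx_is_derive {m n} (t : R) (F : R -> 'M[R]_(m, n)) (dF : 'M[R]_(m, n)) :=
  forall i j, is_derive t 1 (fun u => F u i j) (dF i j).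

Section Derivative.
Variable t : R.
Implicit Types f : R -> R.

Lemma mx_is_derive_cst m n (A : 'M[R]_(m, n)) : mx_is_derive t (fun _ => A) 0.
Proof. by move=> i j; rewrite mxE; apply: is_derive_cst. Qed.

Lemma mx_is_deriveD m n (F G : R -> 'M[R]_(m, n)) dF dG :
  mx_is_derive t F dF -> mx_is_derive t G dG ->
  mx_is_derive t (fun u => F u + G u) (dF + dG).
Proof.
move=> F_der G_der i j; under eq_fun do rewrite mxE.
by rewrite mxE; apply: is_deriveD.
Qed.

Lemma mx_is_deriveZ m n f df (F : R -> 'M[R]_(m, n)) dF :
  is_derive t 1 f df -> mx_is_derive t F dF ->
  mx_is_derive t (fun u => f u *: F u) (f t *: dF + df *: F t).
Proof.
move=> f_der F_der i j; under eq_fun do rewrite mxE.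
by rewrite !mxE [df * _]mulrC; apply: is_deriveM.
Qed.

Lemma mx_is_derive_tr m n (F : R -> 'M[R]_(m, n)) dF :
  mx_is_derive t F dF -> mx_is_derive t (fun u => (F u)^T) dF^T.
Proof. by move=> F_der i j; under eq_fun do rewrite mxE; rewrite mxE. Qed.

Lemma mx_is_deriveM m n p (F : R -> 'M[R]_(m, n)) (G : R -> 'M[R]_(n, p)) dF dG :
  mx_is_derive t F dF -> mx_is_derive t G dG ->
  mx_is_derive t (fun u => F u *m G u) (dF *m G t + F t *m dG).
Proof.
move=> F_der G_der i j; under eq_fun do rewrite mxE.
rewrite !mxE -big_split /=.
have -> : (fun u => \sum_k F u i k * G u k j) = \sum_k (fun u => F u i k * G u k j).
  by apply/funext => u; rewrite fct_sumE.
apply: is_derive_sum => k.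
by rewrite addrC [dF i k * _]mulrC; apply: is_deriveM.
Qed.

End Derivative.
End MatrixCalculus.

Section QuadraticForms.

Lemma addmxE m n (A B : 'M[R]_(m, n)) i j : (A + B) i j = A i j + B i j.
Proof. by rewrite mxE. Qed.

Definition qform {n} (A : 'M[R]_n) (v : 'cV[R]_n) : R := (v^T *m A *m v) 0 0.
Definition sqnorm {n} (v : 'cV[R]_n) : R := (v^T *m v) 0 0.

Lemma qform1 n (v : 'cV[R]_n) : qform 1%:M v = sqnorm v.
Proof. by rewrite /qform mulmx1. Qed.

Lemma sqnormE n (v : 'cV[R]_n) : sqnorm v = \sum_i v i 0 ^+ 2.
Proof. by rewrite /sqnorm mxE; apply: eq_bigr => i _; rewrite mxE expr2. Qed.

Lemma sqnorm_ge0 n (v : 'cV[R]_n) : 0 <= sqnorm v.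
Proof. by rewrite sqnormE sumr_ge0 // => i _; rewrite sqr_ge0. Qed.

Lemma sqr_coord_le_sqnorm n (v : 'cV[R]_n) i : v i 0 ^+ 2 <= sqnorm v.
Proof.
by rewrite sqnormE (bigD1 i) //= lerDl sumr_ge0 // => j _; rewrite sqr_ge0.
Qed.

Lemma sqnorm_gt0 n (v : 'cV[R]_n) : v != 0 -> 0 < sqnorm v.
Proof.
move=> v_neq0; have [i vi_neq0] : exists i, v i 0 != 0.
  apply/existsP; apply: contraR v_neq0; rewrite negb_exists => /forallP v0.
  by apply/eqP/matrixP => i j; rewrite (ord1 j) mxE; apply/eqP/negPn/v0.
apply: lt_le_trans (sqr_coord_le_sqnorm v i).
by rewrite exprn_even_gt0.
Qed.

Lemma q_enormE n (v : 'cV[R]_n) : q_enorm v = Num.sqrt (sqnorm v).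
Proof. by rewrite /q_enorm sqnormE. Qed.

Lemma qformD n (A B : 'M[R]_n) v : qform (A + B) v = qform A v + qform B v.
Proof. by rewrite /qform mulmxDr mulmxDl mxE. Qed.

Lemma qformN n (A : 'M[R]_n) v : qform (- A) v = - qform A v.
Proof. by rewrite /qform mulmxN mulNmx mxE. Qed.

Lemma qformZ n (A : 'M[R]_n) a v : qform A (a *: v) = a ^+ 2 * qform A v.
Proof.
rewrite /qform; have -> : (a *: v)^T = a *: v^T by apply/matrixP => i j; rewrite !mxE.
by rewrite -scalemxAr -!scalemxAl !mxE mulrA expr2.
Qed.

Lemma bilin_tr n (A : 'M[R]_n) (u v : 'cV[R]_n) :
  (u^T *m A *m v) 0 0 = (v^T *m A^T *m u) 0 0.
Proof.
have -> : v^T *m A^T *m u = (u^T *m A *m v)^T by rewrite !trmx_mul !trmxK mulmxA.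
by rewrite [RHS]mxE.
Qed.

Lemma qform_tr n (A : 'M[R]_n) v : qform A^T v = qform A v.
Proof. by rewrite /qform bilin_tr trmxK. Qed.

Lemma qform_skew n (A : 'M[R]_n) v : A^T = - A -> qform A v = 0.
Proof.
move=> A_skew; have : qform A v = - qform A v by rewrite -qformN -A_skew qform_tr.
by move/eqP; rewrite -subr_eq0 opprK -mulr2n mulrn_eq0 => /eqP.
Qed.

Lemma qform_conj n m (P : 'M[R]_(n, m)) (A : 'M[R]_m) v :
  qform (P *m A *m P^T) v = qform A (P^T *m v).
Proof. by rewrite /qform trmx_mul trmxK !mulmxA. Qed.

Lemma sqnorm_mulmx n (P : 'M[R]_n) v : P *m P^T = 1%:M -> sqnorm (P^T *m v) = sqnorm v.
Proof. by move=> PPt; rewrite -qform1 -qform_conj mulmx1 PPt qform1. Qed.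

Lemma qform_is_derive n t (A : R -> 'M[R]_n) (v : R -> 'cV[R]_n) dA dv :
  mx_is_derive t A dA -> mx_is_derive t v dv -> (A t)^T = A t ->
  is_derive t 1 (fun u => qform (A u) (v u))
    (qform dA (v t) + 2 * ((v t)^T *m A t *m dv) 0 0).
Proof.
move=> A_der v_der At_sym.
have vAv_der := mx_is_deriveM (mx_is_deriveM (mx_is_derive_tr v_der) A_der) v_der.
apply: is_derive_eq (vAv_der 0 0) _.
rewrite mulmxDl !addmxE [(dv^T *m _ *m _) 0 0]bilin_tr At_sym /qform; ring.
Qed.

Lemma qform_mulmx n (A : 'M[R]_n) v : (v^T *m (A *m v)) 0 0 = qform A v.
Proof. by rewrite mulmxA. Qed.

Lemma qform_block_diag n (a : R) (B : 'M[R]_n) (u : 'cV[R]_1) (w : 'cV[R]_n) :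
  qform (block_mx a%:M 0 0 B) (col_mx u w) = a * sqnorm u + qform B w.
Proof.
rewrite /qform /sqnorm tr_col_mx mul_row_block !mulmx0 addr0 add0r mul_row_col.
by rewrite mul_mx_scalar -scalemxAl !mxE.
Qed.

Lemma sqnorm_col_mx n (u : 'cV[R]_1) (w : 'cV[R]_n) :
  sqnorm (col_mx u w) = sqnorm u + sqnorm w.
Proof. by rewrite /sqnorm tr_col_mx mul_row_col mxE. Qed.

Lemma qform_block_diag_bounds n (a c1 c2 : R) (B : 'M[R]_n) (v : 'cV[R]_(1 + n)) :
  c1 <= a <= c2 ->
  (forall w, c1 * sqnorm w <= qform B w <= c2 * sqnorm w) ->
  c1 * sqnorm v <= qform (block_mx a%:M 0 0 B) v <= c2 * sqnorm v.
Proof.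
move=> /andP[c1a ac2] Bb; rewrite -[v]vsubmxK qform_block_diag sqnorm_col_mx.
have /andP[lo hi] := Bb (dsubmx v); have u_ge0 := sqnorm_ge0 (usubmx v).
by apply/andP; split; nra.
Qed.

Lemma qform_continuous n (A : 'M[R]_n) : continuous (fun w : 'rV[R]_n => qform A w^T).
Proof.
have id_cont : mx_continuous (fun w : 'rV[R]_n => w) by move=> i j; apply: coord_continuous.
have wt_cont := mx_continuous_tr id_cont.
have A_cont : mx_continuous (fun _ : 'rV[R]_n => A) by apply: mx_continuous_cst.
exact: (mx_continuousM (mx_continuousM (mx_continuous_tr wt_cont) A_cont) wt_cont (i := 0) (j := 0)).
Qed.

Lemma unit_sphere_compact n : compact [set w : 'rV[R]_n | sqnorm w^T = 1].
Proof.
apply: bounded_closed_compact.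
  exists 1; split; first by rewrite num_real.
  move=> r r_gt1 w /= w1; rewrite -[Num.norm w]/(mx_norm w) mx_normrE.
  apply: (big_ind (fun y => y <= r)) => //; first by rewrite ltW // (lt_trans _ r_gt1).
    by move=> x y xr yr; rewrite ge_max xr yr.
  case=> i j _ /=; rewrite (ord1 i); apply: le_trans (ltW r_gt1).
  have := sqr_coord_le_sqnorm w^T j; rewrite w1 mxE -real_normK ?num_real // expr2.
  by have := normr_ge0 (w 0 j); nra.
rewrite (_ : [set w | _] = (fun w => qform 1%:M w^T) @^-1` [set 1]); last first.
  by apply/seteqP; split => w /=; rewrite qform1.
by apply: preimage_closed; [move=> w _; apply: qform_continuous | apply: closed_eq].
Qed.

Lemma posdef_quad_bounds n (A : 'M[R]_n.+1) :
  (forall v, v != 0 -> 0 < qform A v) ->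
  exists c C, 0 < c /\ forall v, c * sqnorm v <= qform A v <= C * sqnorm v.
Proof.
move=> A_pos; set S := [set w : 'rV[R]_n.+1 | sqnorm w^T = 1].
have S_neq0 : S !=set0.
  by exists (delta_mx 0 0); rewrite /S /= /sqnorm trmxK trmx_delta mul_delta_mx mxE.
have A_cont : {within S, continuous (fun w => qform A w^T)}.
  by apply: continuous_subspaceT; apply: qform_continuous.
have S_compact : compact S by apply: unit_sphere_compact.
have [wm wmS wm_min] := compact_EVT_min S_neq0 S_compact A_cont.
have [wM wMS wM_max] := compact_EVT_max S_neq0 S_compact A_cont.
exists (qform A wm^T), (qform A wM^T); split.
  apply: A_pos; apply: contraTneq wmS => /eqP; rewrite trmx_eq0 => /eqP ->.
  by apply/negP; rewrite in_setE /S /= /sqnorm !trmx0 mulmx0 mxE => /esym/eqP; rewrite oner_eq0.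
move=> v; have [->|v_neq0] := eqVneq v 0.
  by rewrite /qform /sqnorm trmx0 !mul0mx !mxE !mulr0 lexx.
have v_gt0 := sqnorm_gt0 v_neq0; set r := Num.sqrt (sqnorm v).
have r_gt0 : 0 < r by rewrite sqrtr_gt0.
have r2 : r ^+ 2 = sqnorm v by rewrite sqr_sqrtr // ltW.
have wS : (r^-1 *: v)^T \in S.
  by rewrite inE /S /= trmxK -qform1 qformZ qform1 -r2 exprVn mulVf // expf_neq0 // gt_eqF.
have -> : qform A v = sqnorm v * qform A (r^-1 *: v).
  by rewrite qformZ exprVn r2 mulrA mulfV ?gt_eqF // mul1r.
have := wm_min _ wS; have := wM_max _ wS; rewrite trmxK => hM hm.
by rewrite ![_ * sqnorm v]mulrC !ler_pM2l ?hm ?hM.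
Qed.

Lemma posdef_eigenvalue_gt0 n (A : 'M[R]_n) a :
  (forall v, v != 0 -> 0 < qform A v) -> eigenvalue A a -> 0 < a.
Proof.
move=> A_pos /eigenvalueP[w wA w_neq0].
have wt_neq0 : w^T != 0 by rewrite trmx_eq0.
have := A_pos _ wt_neq0; rewrite /qform trmxK wA -scalemxAl mxE.
have := sqnorm_gt0 wt_neq0; rewrite /sqnorm trmxK.
by move=> w_gt0; rewrite pmulr_lgt0.
Qed.

End QuadraticForms.

Lemma exp_decay_of_derive_le (V dV : R -> R) (t0 g : R) :
  {within [set u | t0 <= u], continuous V} ->
  (forall u, t0 < u -> is_derive u 1 V (dV u)) ->
  (forall u, t0 < u -> dV u <= - g * V u) ->
  forall t, t0 <= t -> V t <= V t0 * expR (- g * (t - t0)).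
Proof.
move=> V_cont V_der V_le t t0t.
pose E u := expR (g * (u - t0)).
have E_der (u : R) : is_derive u 1 E (E u * g).
  apply: is_derive1_comp (is_derive_expR _) _.
  apply: is_derive_eq (is_deriveM (is_derive_cst g _ _) (is_deriveB _ _)) _.
  by rewrite subr0 scaler0 addr0 [LHS]mulr1.
pose W u := V u * E u.
have W_der (u : R) : t0 < u -> is_derive u 1 W (E u * (dV u + g * V u)).
  move=> t0u; apply: is_derive_eq (is_deriveM (V_der u t0u) (E_der u)) _.
  by rewrite -![_ *: _]/(_ * _); ring.
have W_cont : {within `[t0, +oo[, continuous W}.
  rewrite (_ : `[t0, +oo[ = [set u | t0 <= u]); last first.
    by apply/seteqP; split => u /=; rewrite in_itv /= andbT.
  move=> u; apply: (continuousM (V_cont u)).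
  apply: continuous_subspaceT => x; apply: differentiable_continuous.
  by apply/derivable1_diffP; case: (E_der x).
have W_le : W t <= W t0.
  apply: (ler0_derive1_nincry _ _ W_cont) (lexx t0) t0t => u;
    rewrite in_itv /= andbT => t0u; have W_der_u := W_der u t0u.
    by case: W_der_u.
  rewrite derive1E derive_val pmulr_rle0 ?expR_gt0 //.
  by rewrite -lerBrDr sub0r -mulNr V_le.
have ET : E t * expR (- g * (t - t0)) = 1 by rewrite -expRD mulNr addrN expR0.
move: W_le; rewrite /W /E subrr mulr0 expR0 mulr1 => W_le.
by rewrite -[V t]mulr1 -ET mulrA ler_wpM2r ?expR_ge0.
Qed.

Lemma sqrt_le_of_sqr_le (c1 c2 X Y e : R) :
  0 < c1 -> 0 <= c2 -> 0 <= Y -> 0 <= e -> c1 * X <= c2 * Y * e ^+ 2 ->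
  Num.sqrt X <= Num.sqrt (c2 / c1) * Num.sqrt Y * e.
Proof.
move=> c1_gt0 c2_ge0 Y_ge0 e_ge0 XY.
have c_ge0 : 0 <= c2 / c1 by rewrite divr_ge0 // ltW.
rewrite -[e]ger0_norm // -sqrtr_sqr -!sqrtrM ?(mulr_ge0 c_ge0 Y_ge0) //.
apply: ler_wsqrtr; rewrite -(ler_pM2l c1_gt0).
have -> : c1 * (c2 / c1 * Y * e ^+ 2) = c2 * Y * e ^+ 2 by field; exact: lt0r_neq0.
exact: XY.
Qed.

Section Quaternions.
Implicit Types (x y : 'cV[R]_4).

Lemma col_mx1E n m (A : 'M[R]_(1, n)) (B : 'M[R]_(m.+1, n)) (i : 'I_(1 + m.+1)) j :
  col_mx A B i j = if i == 0 :> nat then A 0 j else B (inord i.-1) j.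
Proof. by rewrite mxE; case: splitP => k /= ->; rewrite ?(ord1 k) ?inord_val. Qed.

Lemma row_mx1E n m (A : 'M[R]_(n, 1)) (B : 'M[R]_(n, m.+1)) i (j : 'I_(1 + m.+1)) :
  row_mx A B i j = if j == 0 :> nat then A i 0 else B i (inord j.-1).
Proof. by rewrite mxE; case: splitP => k /= ->; rewrite ?(ord1 k) ?inord_val. Qed.

Definition vcoord {n} (v : 'cV[R]_n.+1) (k : nat) : R := v (inord k) 0.

Lemma vcoordE n (v : 'cV[R]_n.+1) i j : v i j = vcoord v i.
Proof. by rewrite /vcoord inord_val (ord1 j). Qed.

(* Q(x) is the matrix of left multiplication by the quaternion x. *)
Definition q_entry x (i j : nat) : R :=
  let: (a, b, c, d) := (vcoord x 0, vcoord x 1, vcoord x 2, vcoord x 3) in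
  match i, j with
  | 0, 0 => a | 0, 1 => - b | 0, 2 => - c | 0, 3 => - d
  | 1, 0 => b | 1, 1 => a   | 1, 2 => - d | 1, 3 => c
  | 2, 0 => c | 2, 1 => d   | 2, 2 => a   | 2, 3 => - b
  | 3, 0 => d | 3, 1 => - c | 3, 2 => b   | 3, 3 => a
  | _, _ => 0
  end.

Ltac case_ord i := let H := fresh in case: i => [[|[|[|[|?]]]] H] //.
Ltac simpl_entries :=
  rewrite /q_entry /q_sc /q_vecp /q_hat; rewrite ?mxE ?vcoordE /= ?mxE ?vcoordE /= ?inordK //=
    ?mxE ?vcoordE /= ?inordK //= /bump /= -?val_eqE /= ?inordK //= ?mulr1n ?mulr0n ?addr0 ?add0r.

Lemma q_QmE x i j : q_Qm x i j = q_entry x i j.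
Proof.
rewrite /q_Qm /block_mx col_mx1E !row_mx1E.
by case_ord i; case_ord j; simpl_entries.
Qed.

Lemma q_JmE x i (j : 'I_3) : q_Jm x i j = q_entry x i j.+1.
Proof.
rewrite /q_Jm col_mx1E.
by case_ord i; case: j => [[|[|[|?]]] ?] //; simpl_entries.
Qed.

Lemma q_Qm_polar x y :
  q_Qm x *m (q_Qm y)^T + q_Qm y *m (q_Qm x)^T = (2 * (x^T *m y) 0 0) *: 1%:M.
Proof.
move: (q_Qm x) (q_QmE x) (q_Qm y) (q_QmE y) => Qx QxE Qy QyE.
apply/matrixP => i j; rewrite !mxE !big_ord_recl !big_ord0 !mxE !QxE !QyE !vcoordE /=.
by case_ord i; case_ord j; rewrite /q_entry /bump /= ?mulr1n ?mulr0n; ring.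
Qed.

Lemma q_Qm_orthogonal x : sqnorm x = 1 -> q_Qm x *m (q_Qm x)^T = 1%:M.
Proof.
move=> x1; have two_neq0 : (2 : R) != 0 by rewrite pnatr_eq0.
have := q_Qm_polar x x; rewrite -/(sqnorm x) x1 mulr1 -mulr2n -scaler_nat => QQt.
by rewrite -[LHS](scalerK two_neq0) QQt scalerK.
Qed.

Lemma q_Qm_orthogonalC x : sqnorm x = 1 -> (q_Qm x)^T *m q_Qm x = 1%:M.
Proof. by move=> x1; apply: mulmx1C; apply: q_Qm_orthogonal. Qed.

Lemma q_Qm_row x : q_Qm x = row_mx x (q_Jm x).
Proof.
apply/matrixP => i j; rewrite row_mx1E q_QmE.
case: j => [[|j] j_lt4] /=; first by case_ord i; rewrite /q_entry vcoordE.
by rewrite q_JmE inordK.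
Qed.

Definition q_Nm (M : 'M[R]_3) (m0 : R) : 'M[R]_(1 + 3) := block_mx m0%:M 0 0 M.

Lemma q_Nm_sym M m0 : M^T = M -> (q_Nm M m0)^T = q_Nm M m0.
Proof. by move=> MT; rewrite /q_Nm tr_block_mx tr_scalar_mx !trmx0 MT. Qed.

Lemma q_Dm_factor M m0 x : q_Dm M m0 x = q_Qm x *m q_Nm M m0 *m (q_Qm x)^T.
Proof.
rewrite q_Qm_row /q_Nm (tr_row_mx x (q_Jm x)) (mul_row_block x (q_Jm x) m0%:M).
rewrite !mulmx0 addr0 add0r mul_row_col.
by rewrite mul_mx_scalar -scalemxAl addrC.
Qed.

Lemma q_Dm_quad_bounds M m0 c1 c2 x v :
  sqnorm x = 1 -> c1 <= m0 <= c2 ->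
  (forall w, c1 * sqnorm w <= qform M w <= c2 * sqnorm w) ->
  c1 * sqnorm v <= qform (q_Dm M m0 x) v <= c2 * sqnorm v.
Proof.
move=> x1 m0_bounds M_bounds.
rewrite q_Dm_factor qform_conj -(sqnorm_mulmx v (q_Qm_orthogonal x1)).
exact: qform_block_diag_bounds.
Qed.

Lemma q_Dm_uniform_bounds M m0 a :
  (forall w, w != 0 -> 0 < qform M w) -> eigenvalue M a -> a <= m0 ->
  exists c1 c2, [/\ 0 < c1, 0 < c2 & forall x v, sqnorm x = 1 ->
    c1 * sqnorm v <= qform (q_Dm M m0 x) v <= c2 * sqnorm v].
Proof.
move=> M_pos Ma am0; have m0_gt0 := lt_le_trans (posdef_eigenvalue_gt0 M_pos Ma) am0.
have [cM [CM [cM_gt0 M_bounds]]] := posdef_quad_bounds M_pos.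
exists (Num.min m0 cM), (Num.max m0 CM); split; rewrite ?lt_min ?lt_max ?m0_gt0 //.
move=> x v x1; apply: q_Dm_quad_bounds x1 _ _; first by rewrite ge_min le_max !lexx.
move=> w; have /andP[lo hi] := M_bounds w; have w_ge0 := sqnorm_ge0 w.
apply/andP; split; [apply: le_trans lo | apply: le_trans hi _];
  by apply: ler_wpM2r; rewrite // ?ge_min ?le_max lexx ?orbT.
Qed.

Lemma q_hat_skew (u : 'cV[R]_3) : (q_hat u)^T = - q_hat u.
Proof.
apply/matrixP => i j; rewrite !mxE.
by case: i => [[|[|[|?]]] ?]; case: j => [[|[|[|?]]] ?]; rewrite //= ?oppr0 ?opprK.
Qed.

Lemma mx_continuous_q_Qm (T : topologicalType) (x : T -> 'cV[R]_4) :
  mx_continuous x -> mx_continuous (fun u => q_Qm (x u)).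
Proof.
move=> x_cont i j y; under eq_fun do rewrite q_QmE.
by case_ord i; case_ord j; rewrite /q_entry /vcoord;
  first [exact: x_cont | exact: (continuousN (x_cont _ _ y))].
Qed.

Lemma mx_is_derive_q_Qm t (x : R -> 'cV[R]_4) dx :
  mx_is_derive t x dx -> mx_is_derive t (fun u => q_Qm (x u)) (q_Qm dx).
Proof.
move=> x_der i j; under eq_fun do rewrite q_QmE.
by rewrite q_QmE; case_ord i; case_ord j; rewrite /q_entry /vcoord;
  first [exact: x_der | exact: (is_deriveN (x_der _ _))].
Qed.

Lemma q_Dm_derive_quad M m0 x dx v :
  M^T = M -> sqnorm x = 1 -> (x^T *m dx) 0 0 = 0 ->
  qform (q_Qm dx *m q_Nm M m0 *m (q_Qm x)^T + q_Qm x *m q_Nm M m0 *m (q_Qm dx)^T) v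
  = 2 * qform (q_Cm M m0 x dx) v.
Proof.
move=> MT x1 x_dx; set N := q_Nm M m0; set D := q_Qm x *m N *m (q_Qm x)^T.
set W := q_Qm dx *m (q_Qm x)^T.
have NT : N^T = N by apply: q_Nm_sym.
have DT : D^T = D by rewrite /D !trmx_mul trmxK NT mulmxA.
have W_skew : W^T = - W.
  apply/eqP; rewrite -addr_eq0 /W trmx_mul trmxK q_Qm_polar.
  by rewrite x_dx mulr0 scale0r.
have WD : q_Qm dx *m N *m (q_Qm x)^T = W *m D.
  by rewrite /W /D !mulmxA -[in RHS](mulmxA (q_Qm dx)) q_Qm_orthogonalC // mulmx1.
have WDT : q_Qm x *m N *m (q_Qm dx)^T = (W *m D)^T.
  by rewrite -WD !trmx_mul trmxK NT mulmxA.
have DW : qform (D *m W) v = - qform (W *m D) v.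
  by rewrite -qform_tr trmx_mul DT W_skew mulNmx qformN.
have JHJ : qform (q_Jm x *m q_hat (M *m q_omg x dx) *m (q_Jm x)^T) v = 0.
  by rewrite qform_conj qform_skew // q_hat_skew.
rewrite WD WDT qformD qform_tr /q_Cm q_Dm_factor -/N -/D -(mulmxA D) -/W.
by rewrite qformD !qformN JHJ DW; ring.
Qed.

Lemma closed_loop_s_dynamics M m0 lam Kr x dx ddx :
  q_Dm M m0 x *m ddx + q_Cm M m0 x dx *m dx = q_tau_cl M m0 lam Kr x dx ->
  q_Dm M m0 x *m (ddx + lam *: (q_sc x *: dx + q_sc dx *: x))
  = - ((q_Cm M m0 x dx + Kr) *m s_of lam x dx).
Proof.
rewrite /q_tau_cl /s_of.
move: (q_Dm M m0 x) (q_Cm M m0 x dx) (q_sc x *: dx + _) (q_sc x *: x - _) => D C v w.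
move=> /(canRL (addrK _)) Dddx; rewrite mulmxDr Dddx !mulmxDl !mulmxDr -!scalemxAr.
move: (D *m v) (C *m w) (C *m dx) (Kr *m dx) (Kr *m w) => a b c d e.
by apply/matrixP => i j; rewrite !mxE; ring.
Qed.

End Quaternions.

Definition q_lyap M m0 lam (x dx : 'cV[R]_4) : R := qform (q_Dm M m0 x) (s_of lam x dx).

Section ClosedLoop.
Variables (M : 'M[R]_3) (m0 lam : R) (Kr : 'M[R]_4) (t0 : R) (q dq ddq : R -> 'cV[R]_4).
Hypotheses (MT : M^T = M) (sol : closed_loop_solution M m0 lam Kr t0 q dq ddq).

Lemma solution_sqnorm u : t0 <= u -> sqnorm (q u) = 1.
Proof.
case: sol => _ _ q_unit _ t0u; have := q_unit u t0u.
by rewrite q_enormE => /(congr1 (fun r => r ^+ 2)); rewrite sqr_sqrtr ?sqnorm_ge0 // expr1n.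
Qed.

Lemma solution_is_derive u :
  t0 < u -> mx_is_derive u q (dq u) /\ mx_is_derive u dq (ddq u).
Proof.
by case: sol => der _ _ _ t0u; split => i j; rewrite (ord1 j); have [] := der u t0u i.
Qed.

Lemma solution_continuous :
  mx_continuous (q : subspace [set u | t0 <= u] -> _) /\
  mx_continuous (dq : subspace [set u | t0 <= u] -> _).
Proof. by case: sol => _ cont _ _; split => i j; rewrite (ord1 j); have [] := cont i. Qed.

Lemma solution_tangent u : t0 < u -> ((q u)^T *m dq u) 0 0 = 0.
Proof.
move=> t0u; have [q_der _] := solution_is_derive t0u.
have sq_der := qform_is_derive (mx_is_derive_cst u 1%:M) q_der (tr_scalar_mx _ 1).
have sq_cst : is_derive u 1 (fun v => qform 1%:M (q v)) 0.
  apply: (near_eq_is_derive _ (is_derive_cst (1 : R) u 1)).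
  by near=> v; rewrite qform1 solution_sqnorm // ltW //; near: v; apply: lt_nbhsr.
have := derive_val (is_derive := sq_der); rewrite (derive_val (is_derive := sq_cst)).
by rewrite mulmx1 /qform mulmx0 mul0mx mxE add0r => /esym/eqP; rewrite mulf_eq0 pnatr_eq0 => /eqP.
Unshelve. all: by end_near.
Qed.

Lemma q_lyap_is_derive u : t0 < u ->
  is_derive u 1 (fun u => q_lyap M m0 lam (q u) (dq u))
    (-2 * qform Kr (s_of lam (q u) (dq u))).
Proof.
move=> t0u; have [q_der dq_der] := solution_is_derive t0u.
have s_der : mx_is_derive u (fun u => s_of lam (q u) (dq u))
    (ddq u + lam *: (q_sc (q u) *: dq u + q_sc (dq u) *: q u)).
  have := mx_is_deriveD dq_der (mx_is_deriveZ (is_derive_cst lam u 1)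
    (mx_is_deriveD (mx_is_deriveZ (q_der 0 0) q_der) (mx_is_derive_cst u (- q_one4 R)))).
  by rewrite addr0 scale0r addr0.
set N := q_Nm M m0; set dQ := q_Qm (dq u); set Q := q_Qm (q u).
have D_der : mx_is_derive u (fun u => q_Dm M m0 (q u)) (dQ *m N *m Q^T + Q *m N *m dQ^T).
  under eq_fun do rewrite q_Dm_factor.
  have Q_der := mx_is_derive_q_Qm q_der.
  have := mx_is_deriveM (mx_is_deriveM Q_der (mx_is_derive_cst u N)) (mx_is_derive_tr Q_der).
  by rewrite mulmx0 addr0.
have D_sym : (q_Dm M m0 (q u))^T = q_Dm M m0 (q u).
  by rewrite q_Dm_factor !trmx_mul trmxK q_Nm_sym // mulmxA.
apply: is_derive_eq (qform_is_derive D_der s_der D_sym) _.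
rewrite q_Dm_derive_quad ?solution_sqnorm ?ltW ?solution_tangent //.
have [_ _ _ lagrange] := sol.
rewrite -mulmxA (closed_loop_s_dynamics (lagrange u t0u)) -mulNmx qform_mulmx qformN qformD.
ring.
Qed.

Lemma q_lyap_continuous :
  {within [set u | t0 <= u], continuous (fun u => q_lyap M m0 lam (q u) (dq u))}.
Proof.
have [q_cont dq_cont] := solution_continuous.
pose T := subspace [set u : R | t0 <= u].
have cst_cont m n (A : 'M[R]_(m, n)) : mx_continuous (fun _ : T => A).
  exact: mx_continuous_cst.
have s_cont : mx_continuous (fun u : T => s_of lam (q u) (dq u)).
  apply: (mx_continuousD dq_cont (mx_continuousZ (@cst_continuous _ _ lam) _)).
  exact: mx_continuousD (mx_continuousZ (q_cont 0 0) q_cont) (cst_cont _ _ _).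
have D_cont : mx_continuous (fun u : T => q_Dm M m0 (q u)).
  rewrite (_ : (fun u : T => _) = fun u => q_Qm (q u) *m q_Nm M m0 *m (q_Qm (q u))^T).
    have Q_cont := mx_continuous_q_Qm q_cont.
    exact: mx_continuousM (mx_continuousM Q_cont (cst_cont _ _ _)) (mx_continuous_tr Q_cont).
  by apply/funext => u; rewrite q_Dm_factor.
move=> x; exact: (mx_continuousM (mx_continuousM (mx_continuous_tr s_cont) D_cont) s_cont
  (i := 0) (j := 0) (x := x)).
Qed.

Lemma q_lyap_exp_decay c2 cK : 0 < c2 -> 0 <= cK ->
  (forall x v, sqnorm x = 1 -> qform (q_Dm M m0 x) v <= c2 * sqnorm v) ->
  (forall v, cK * sqnorm v <= qform Kr v) ->
  forall t, t0 <= t -> q_lyap M m0 lam (q t) (dq t)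
    <= q_lyap M m0 lam (q t0) (dq t0) * expR (- (2 * (cK / c2)) * (t - t0)).
Proof.
move=> c2_gt0 cK_ge0 D_le K_ge.
apply: exp_decay_of_derive_le q_lyap_continuous q_lyap_is_derive _ => u t0u.
set v := s_of lam (q u) (dq u); have V_le := D_le _ v (solution_sqnorm (ltW t0u)).
rewrite !mulNr lerN2 -mulrA ler_pM2l //; apply: le_trans (K_ge v).
rewrite mulrAC ler_pdivrMr // -mulrA; apply: (ler_wpM2l cK_ge0).
by rewrite mulrC.
Qed.

End ClosedLoop.
End ExponentialStability.

Theorem lemma6 (R : realType) (M : 'M[R]_3) (m0 lam : R) (Kr : 'M[R]_4) :
  sym_posdef M ->
  (exists2 a : R, eigenvalue M a & a <= m0) ->
  (exists2 b : R, eigenvalue M b & m0 <= b) ->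
  0 < lam ->
  sym_posdef Kr ->
  exists k : R, exists gamma : R, [/\ 0 < k, 0 < gamma &
    forall (t0 : R) (q dq ddq : R -> 'cV[R]_4),
      closed_loop_solution M m0 lam Kr t0 q dq ddq ->
      forall t, t0 <= t ->
        q_enorm (s_of lam (q t) (dq t))
        <= k * q_enorm (s_of lam (q t0) (dq t0)) * expR (- gamma * (t - t0))].
Proof.
move=> [MT M_pos] [a Ma am0] _ _ [_ Kr_pos].
have [c1 [c2 [c1_gt0 c2_gt0 D_bounds]]] := q_Dm_uniform_bounds M_pos Ma am0.
have [cK [CK [cK_gt0 Kr_bounds]]] := posdef_quad_bounds Kr_pos.
have D_le x v : sqnorm x = 1 -> qform (q_Dm M m0 x) v <= c2 * sqnorm v.
  by move=> x1; case/andP: (D_bounds x v x1).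
have K_ge v : cK * sqnorm v <= qform Kr v by case/andP: (Kr_bounds v).
exists (Num.sqrt (c2 / c1)), (cK / c2); split; rewrite ?sqrtr_gt0 ?divr_gt0 //.
move=> t0 q dq ddq sol t t0t.
have V_decay := q_lyap_exp_decay MT sol c2_gt0 (ltW cK_gt0) D_le K_ge t0t.
rewrite !q_enormE; apply: sqrt_le_of_sqr_le; rewrite ?(ltW c2_gt0) ?sqnorm_ge0 ?expR_ge0 //.
have /andP[lo _] := D_bounds _ (s_of lam (q t) (dq t)) (solution_sqnorm sol t0t).
have /andP[_ hi] := D_bounds _ (s_of lam (q t0) (dq t0)) (solution_sqnorm sol (lexx t0)).
apply: le_trans lo (le_trans V_decay _).
rewrite -expRM_natl (_ : 2 * (- (cK / c2) * (t - t0)) = - (2 * (cK / c2)) * (t - t0)).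
  by rewrite ler_wpM2r ?expR_ge0.
by ring.
Qed.
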